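(* Let $r\in\mathbb{Z}$, let $P(r)$ be the lower-triangular matrix with $(n,k)$ entry $[x^n]\,\frac{1+rx^2}{1+x^2}\left(\frac{x}{1+x^2}\right)^k$, let $M(r)=P(r)^{-1}$, and let $s_n=s_n(r)=\sum_{k=0}^n M(r)_{n,k}$ be the row sums of $M(r)$. Then for all $n\ge 0$, $$s_n=\sum_{k=0}^{\lfloor \frac{n}{2} \rfloor} \binom{n}{\lfloor \frac{n-2k}{2} \rfloor}(-1)^k r^k.$$
   Context: $[x^n]h(x)$ denotes the coefficient of $x^n$ in $h(x)$. $P(r)$ is the coefficient array of the restricted Chebyshev–Boubaker polynomials and $M(r)$ is its moment matrix, the Riordan array $\left(\frac{\sqrt{1-4x^2}(r-1)+r+1}{2(r+x^2(r-1)^2)}, \frac{1-\sqrt{1-4x^2}}{2x}\right)$. *)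

From mathcomp Require Import all_boot all_order all_algebra.
Set Implicit Arguments. Unset Strict Implicit. Unset Printing Implicit Defensive.
Import GRing.Theory Num.Theory.
Local Open Scope ring_scope.

(* Truncated inverse of a polynomial p with p(0) = 1, modulo x^(n+1):
   1/p = \sum_j (1 - p)^j, and only j <= n contribute to [x^m], m <= n. *)
Definition inv_trunc (p : {poly int}) (n : nat) : {poly int} :=
  \sum_(j < n.+1) (1 - p) ^+ j.

(* [x^n] of the formal power series  num / den  (den(0) = 1). *)
Definition coef_ratio (num den : {poly int}) (n : nat) : int :=
  (num * inv_trunc den n)`_n.

(* P(r)_{n,k} = [x^n] (1 + r x^2)/(1 + x^2) * (x/(1+x^2))^k
              = [x^n] ((1 + r x^2) x^k) / (1 + x^2)^(k+1). *)
Definition Pentry (r : int) (n k : nat) : int :=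
  coef_ratio ((1 + r *: 'X^2) * 'X^k) ((1 + 'X^2) ^+ k.+1) n.

Definition Pmat (r : int) (N : nat) : 'M[int]_N :=
  \matrix_(i < N, j < N) Pentry r i j.

(* Since P(r) is lower unitriangular, the leading
   (n+1) x (n+1) block of P(r)^{-1} is the inverse of the leading
   (n+1) x (n+1) block of P(r); so M(r)_{n,k} (k <= n) is read off there. *)
Definition Mentry (r : int) (n : nat) (k : 'I_n.+1) : int :=
  (invmx (Pmat r n.+1)) (ord_max : 'I_n.+1) k.

Arguments Mentry r n k : clear implicits.

Definition srow (r : int) (n : nat) : int :=
  \sum_(k < n.+1) Mentry r n k.

From mathcomp Require Import all_boot all_order all_algebra ring zify.
Import GRing.Theory Num.Theory.
Set Implicit Arguments. Unset Strict Implicit. Unset Printing Implicit Defensive.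
Local Open Scope ring_scope.

(** With Q = 1 + x^2 and G = 1 + r x^2, column k of P(r) is G x^k / Q^(k+1),
    so the columns satisfy Q P_(k+1) = x P_k and Q P_0 = G.  These translate
    into three-term recurrences for the entries of P(r), which are mirrored by
    the recurrence b(n+1, k+1) = b(n, k) + b(n, k+2) of the ballot numbers
    b(n, k) (nonnegative +-1 paths of length n from height 0 to height k).
    Hence M(r)_(n,k) = sum_j (-r)^j b(n, k + 2j) is a left inverse of P(r).
    Summing over k, the tails sum_(m >= l) b(n, m) are the binomial
    coefficients C(n, (n - l)/2), which gives the row sums. *)

Lemma big_ord_widen0 (R : Type) (idx : R) (op : Monoid.law idx)
    (F : nat -> R) (n m : nat) :
  (n <= m)%N -> (forall i, (n <= i)%N -> F i = idx) ->
  \big[op/idx]_(i < m) F i = \big[op/idx]_(i < n) F i.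
Proof.
move=> le_nm F0; rewrite (big_ord_widen m F le_nm) [RHS]big_mkcond /=.
by apply: eq_bigr => i _; case: ltnP => // /F0.
Qed.

Section LeftInverseByRecurrence.
Variables (R : comNzRingType) (r : R) (M P : nat -> nat -> R).

Definition Pprev (m k : nat) : R := if m is m'.+1 then P m' k else 0.

Hypothesis M_row0 : forall k, M 0 k = (k == 0)%:R.
Hypothesis M_recS : forall n k, M n.+1 k.+1 = M n k + M n k.+2.
Hypothesis M_rec0 : forall n, M n.+1 0 = (1 - r) * M n 1.
Hypothesis P_row0 : forall k, P 0 k = (k == 0)%:R.
Hypothesis P_recS : forall m k, P m.+1 k.+1 + Pprev m k.+1 = P m k.
Hypothesis P_rec0 : forall m, P m.+1 0 + Pprev m 0 = r * (m == 1)%:R.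

Lemma M_eq0 n k : (n < k)%N -> M n k = 0.
Proof.
elim: n k => [|n IHn] [|k] lt_nk //.
by rewrite M_recS !IHn ?addr0 //; lia.
Qed.

Lemma sum_M_recS_shift i k K : (i < K)%N ->
  \sum_(j < K) (M i j + M i j.+2) * P j.+1 k =
  \sum_(j < K.+2) M i j * (P j.+1 k + Pprev j k) - M i 1 * P 0 k.
Proof.
move=> lt_iK.
have pad : \sum_(j < K.+2) M i j * P j.+1 k = \sum_(j < K) M i j * P j.+1 k.
  by rewrite !big_ord_recr /= !M_eq0 ?mul0r ?addr0 //; lia.
have shift : \sum_(j < K.+2) M i j * Pprev j k =
    M i 1 * P 0 k + \sum_(j < K) M i j.+2 * P j.+1 k.
  by rewrite !big_ord_recl /= mulr0 add0r.
under eq_bigr do rewrite mulrDl.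
under [X in _ = X - _]eq_bigr do rewrite mulrDr.
by rewrite !big_split /= pad shift; ring.
Qed.

Lemma sum_MP_delta i k K : (i < K)%N -> \sum_(j < K) M i j * P j k = (i == k)%:R.
Proof.
elim: i k K => [|i IHi] k [|K] // lt_iK.
  rewrite big_ord_recl big1 => [|j _]; last by rewrite M_row0 mul0r.
  by rewrite M_row0 P_row0 mul1r addr0 eq_sym.
rewrite big_ord_recl; under eq_bigr do rewrite lift0 M_recS.
rewrite sum_M_recS_shift //; case: k => [|k].
  rewrite M_rec0 P_row0; under eq_bigr do rewrite P_rec0.
  rewrite !big_ord_recl big1 => [|j _]; last by rewrite /= !mulr0.
  by rewrite /= !mulr0 !mulr1; ring.
rewrite P_row0 !mulr0 subr0 add0r; under eq_bigr do rewrite P_recS.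
by apply: IHi; lia.
Qed.

End LeftInverseByRecurrence.

Section CongruenceModXn.
Variable R : nzSemiRingType.

(* p = q modulo 'X^N.+1 *)
Definition eqmodX (N : nat) (p q : {poly R}) :=
  forall m, (m <= N)%N -> p`_m = q`_m.

Lemma eqmodX_sym N p q : eqmodX N p q -> eqmodX N q p.
Proof. by move=> epq m le_mN; rewrite epq. Qed.

Lemma eqmodX_trans N p q s : eqmodX N p q -> eqmodX N q s -> eqmodX N p s.
Proof. by move=> epq eqs m le_mN; rewrite epq ?eqs. Qed.

Lemma eqmodX_leq N N' p q : (N' <= N)%N -> eqmodX N p q -> eqmodX N' p q.
Proof. by move=> le_N'N epq m le_mN'; apply: epq; apply: leq_trans le_N'N. Qed.

Lemma eqmodX_mull N s p q : eqmodX N p q -> eqmodX N (s * p) (s * q).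
Proof.
move=> epq m le_mN; rewrite !coefM; apply: eq_bigr => j _.
by rewrite epq // (leq_trans (leq_subr _ _) le_mN).
Qed.

End CongruenceModXn.

Lemma eqmodX_cancel (R : comNzRingType) N (d e a b : {poly R}) :
  eqmodX N (d * e) 1 -> eqmodX N (d * a) (d * b) -> eqmodX N a b.
Proof.
move=> de1 eab.
have eaa : eqmodX N a (e * (d * a)).
  have -> : e * (d * a) = a * (d * e) by ring.
  by apply: eqmodX_sym; rewrite -[X in eqmodX _ _ X]mulr1; apply: eqmodX_mull.
have ebb : eqmodX N (e * (d * b)) b.
  have -> : e * (d * b) = b * (d * e) by ring.
  by rewrite -[X in eqmodX _ _ X]mulr1; apply: eqmodX_mull.
exact: eqmodX_trans eaa (eqmodX_trans (eqmodX_mull e eab) ebb).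
Qed.

Section TruncatedInverse.
Variable d : {poly int}.
Hypothesis d0 : d`_0 = 1.

Lemma mul_inv_trunc N : eqmodX N (d * inv_trunc d N) 1.
Proof.
have telescope : d * inv_trunc d N = 1 - (1 - d) ^+ N.+1.
  have := subrXX 1 (1 - d) N.+1; rewrite expr1n => ->.
  rewrite opprB addrC addrNK /inv_trunc.
  by congr (_ * _); apply: eq_bigr => i _; rewrite expr1n mul1r.
move=> m le_mN; rewrite telescope.
have /factor_theorem[q ->] : root (1 - d) 0.
  by rewrite /root horner_coef0 coefB coef1 d0 subrr.
by rewrite subr0 exprMn coefB coefMXn ltnS le_mN subr0.
Qed.

Lemma eqmodX_cancel_unit N a b : eqmodX N (d * a) (d * b) -> eqmodX N a b.
Proof. exact/eqmodX_cancel/mul_inv_trunc. Qed.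

Lemma mul_ratio_trunc N c : eqmodX N (d * (c * inv_trunc d N)) c.
Proof.
by rewrite mulrCA -[c in eqmodX _ _ c]mulr1; apply/eqmodX_mull/mul_inv_trunc.
Qed.

Lemma coef_ratioE c N m : (m <= N)%N -> coef_ratio c d m = (c * inv_trunc d N)`_m.
Proof.
move=> le_mN; suff: eqmodX m (c * inv_trunc d m) (c * inv_trunc d N) by apply.
apply: eqmodX_cancel_unit; apply: eqmodX_trans (mul_ratio_trunc (N := m) c) _.
exact/eqmodX_sym/(eqmodX_leq le_mN)/mul_ratio_trunc.
Qed.

End TruncatedInverse.

Section PColumns.
Variable r : int.

Local Notation Q := (1 + 'X^2 : {poly int}).
Local Notation G := (1 + r *: 'X^2 : {poly int}).

Definition Pcol (k N : nat) : {poly int} := G * 'X^k * inv_trunc (Q ^+ k.+1) N.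

Lemma coef0_Qexp k : (Q ^+ k)`_0 = 1.
Proof. by rewrite -horner_coef0 !hornerE expr1n. Qed.

Lemma Pentry_Pcol N m k : (m <= N)%N -> Pentry r m k = (Pcol k N)`_m.
Proof. exact/coef_ratioE/coef0_Qexp. Qed.

Lemma Pcol_recS N k : eqmodX N (Q * Pcol k.+1 N) ('X * Pcol k N).
Proof.
(* After multiplication by Q^(k+1), both sides are G x^(k+1) mod x^(N+1). *)
apply: (@eqmodX_cancel_unit (Q ^+ k.+1)); first exact: coef0_Qexp.
have -> : Q ^+ k.+1 * (Q * Pcol k.+1 N) =
    Q ^+ k.+2 * (G * 'X^(k.+1) * inv_trunc (Q ^+ k.+2) N).
  by rewrite /Pcol [Q ^+ k.+2]exprS; ring.
have -> : Q ^+ k.+1 * ('X * Pcol k N) =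
    'X * (Q ^+ k.+1 * (G * 'X^k * inv_trunc (Q ^+ k.+1) N)) by rewrite /Pcol; ring.
apply: eqmodX_trans (mul_ratio_trunc (coef0_Qexp k.+2) _) _.
rewrite (exprS 'X k) mulrCA.
by apply/eqmodX_mull/eqmodX_sym/mul_ratio_trunc/coef0_Qexp.
Qed.

Lemma Pcol_rec0 N : eqmodX N (Q * Pcol 0 N) G.
Proof.
have := mul_ratio_trunc (coef0_Qexp 1) (N := N) G.
by rewrite /Pcol expr1 expr0 mulr1.
Qed.

Lemma coef_QPcol k m :
  (Q * Pcol k m)`_m = Pentry r m k + (if (m < 2)%N then 0 else Pentry r (m - 2) k).
Proof.
rewrite mulrDl mul1r coefD coefXnM -Pentry_Pcol //.
by case: ltnP => // _; rewrite -Pentry_Pcol ?leq_subr.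
Qed.

Lemma Pentry_row0 k : Pentry r 0 k = (k == 0)%:R.
Proof.
have := coef_QPcol k 0; rewrite addr0 => <-.
case: k => [|k]; last by rewrite Pcol_recS // coefXM.
by rewrite Pcol_rec0 // coefD coef1 coefZ coefXn mulr0 addr0.
Qed.

Lemma Pentry_recS m k : Pentry r m.+1 k.+1 + Pprev (Pentry r) m k.+1 = Pentry r m k.
Proof.
have := Pcol_recS k (leqnn m.+1).
rewrite coef_QPcol coefXM /= -Pentry_Pcol // => <-.
by case: m => [|m] //=; rewrite subn2.
Qed.

Lemma Pentry_rec0 m : Pentry r m.+1 0 + Pprev (Pentry r) m 0 = r * (m == 1)%:R.
Proof.
have := Pcol_rec0 (leqnn m.+1).
rewrite coef_QPcol coefD coef1 coefZ coefXn add0r => <-.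
by case: m => [|m] //=; rewrite subn2.
Qed.

End PColumns.

Section BallotNumbers.
Local Open Scope nat_scope.

Fixpoint ballot (n m : nat) : nat :=
  match n, m with
  | 0, _ => m == 0
  | n'.+1, 0 => ballot n' 1
  | n'.+1, m'.+1 => ballot n' m' + ballot n' m'.+2
  end.

Lemma ballot_eq0 n m : n < m -> ballot n m = 0.
Proof. by elim: n m => [|n IHn] [|m] //= lt_nm; rewrite !IHn //; lia. Qed.

Definition ballot_tail (n m : nat) : nat := \sum_(k < n.+1) ballot n (k + m).

Lemma ballot_tail_recl n m : ballot_tail n m = ballot n m + ballot_tail n m.+1.
Proof.
rewrite /ballot_tail big_ord_recl /= add0n; congr (_ + _).
rewrite [RHS]big_ord_recr /= [ballot n _]ballot_eq0 ?addn0; last by lia.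
by apply: eq_bigr => j _; rewrite addSnnS.
Qed.

Lemma ballot_tailSS n m :
  ballot_tail n.+1 m.+1 = ballot_tail n m + ballot_tail n m.+2.
Proof.
have pad l : \sum_(k < n.+2) ballot n (k + l) = ballot_tail n l.
  by rewrite big_ord_recr /= [ballot n _]ballot_eq0 ?addn0 //; lia.
rewrite -!pad -big_split /=; apply: eq_bigr => k _.
by rewrite !addnS.
Qed.

Lemma ballot_tailS0 n : ballot_tail n.+1 0 = ballot_tail n 0 + ballot_tail n 1.
Proof.
by rewrite ballot_tail_recl ballot_tailSS [ballot_tail n 1]ballot_tail_recl /=; lia.
Qed.

Definition binom_tail (n m : nat) : nat :=
  if m <= n then 'C(n, (n - m)./2) else 0.

Lemma binom_tailSS n m : binom_tail n.+1 m.+1 = binom_tail n m + binom_tail n m.+2.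
Proof.
rewrite /binom_tail ltnS subSS; case: (leqP m n) => [le_mn|]; last first.
  by move=> lt_nm; rewrite ifN //; lia.
have [d ->] : exists d, n = m + d by exists (n - m); rewrite subnKC.
rewrite addKn; case: d => [|[|d]] /=.
- by rewrite ifN ?bin0 //; lia.
- by rewrite ifN ?bin0 //; lia.
rewrite ifT; last by lia.
by rewrite (_ : m + d.+2 - m.+2 = d); [rewrite binS addnC | lia].
Qed.

Lemma binom_tailS0 n : binom_tail n.+1 0 = binom_tail n 0 + binom_tail n 1.
Proof.
rewrite /binom_tail !subn0 /=; case: n => [|n] //=.
rewrite subSS subn0 binS; congr (_ + _).
have le_half : uphalf n <= n.+1 by rewrite uphalfE; lia.
by rewrite -[RHS](bin_sub le_half); congr 'C(_, _); rewrite uphalfE; lia.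
Qed.

Lemma ballot_tailE n m : ballot_tail n m = binom_tail n m.
Proof.
elim: n m => [|n IHn] [|m].
- by rewrite /ballot_tail big_ord1.
- by rewrite /ballot_tail big_ord1.
- by rewrite ballot_tailS0 binom_tailS0 !IHn.
- by rewrite ballot_tailSS binom_tailSS !IHn.
Qed.

End BallotNumbers.

Section ExplicitInverse.
Variable r : int.

Definition Minv (n k : nat) : int :=
  \sum_(j < n.+1) (-r) ^+ j * (ballot n (k + j.*2))%:R.

Lemma Minv_widen n k K : (n < K)%N ->
  Minv n k = \sum_(j < K) (-r) ^+ j * (ballot n (k + j.*2))%:R.
Proof.
move=> lt_nK; rewrite /Minv (big_ord_widen0 _
  (F := fun j => (-r) ^+ j * (ballot n (k + j.*2))%:R) lt_nK) // => j le_nj.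
by rewrite ballot_eq0 ?mulr0 //; lia.
Qed.

Lemma Minv_row0 k : Minv 0 k = (k == 0)%:R.
Proof. by rewrite /Minv big_ord1 mul1r addn0. Qed.

Lemma Minv_recS n k : Minv n.+1 k.+1 = Minv n k + Minv n k.+2.
Proof.
rewrite (Minv_widen k (leqnSn n.+1)) (Minv_widen k.+2 (leqnSn n.+1)) -big_split.
by apply: eq_bigr => j _; rewrite !addSn /= natrD mulrDr.
Qed.

Lemma Minv_rec0 n : Minv n.+1 0 = (1 - r) * Minv n 1.
Proof.
set X := \sum_(j < n.+1) (-r) ^+ j.+1 * (ballot n j.*2.+3)%:R.
have M1 : Minv n 1 = (ballot n 1)%:R + X.
  rewrite (Minv_widen 1 (leqnSn n.+1)) big_ord_recl mul1r.
  by congr (_ + _); apply: eq_bigr => j _; rewrite lift0 doubleS add1n.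
have M0 : Minv n.+1 0 = (ballot n 1)%:R + (-r) * Minv n 1 + X.
  rewrite /Minv big_ord_recl mul1r -addrA; congr (_ + _).
  rewrite /X mulr_sumr -big_split; apply: eq_bigr => j _.
  by rewrite lift0 doubleS !add0n /= natrD exprS add1n; ring.
by rewrite M0 M1; ring.
Qed.

End ExplicitInverse.

Lemma sum_Minv_Pentry r i k K :
  (i < K)%N -> \sum_(j < K) Minv r i j * Pentry r j k = (i == k)%:R.
Proof.
apply: sum_MP_delta.
- exact: Minv_row0.
- exact: Minv_recS.
- exact: Minv_rec0.
- exact: Pentry_row0.
- exact: Pentry_recS.
- exact: Pentry_rec0.
Qed.

Lemma invmx_Pmat r N : invmx (Pmat r N) = \matrix_(i < N, j < N) Minv r i j.
Proof.
set M := \matrix_(i, j) _.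
have MP1 : M *m Pmat r N = 1%:M.
  apply/matrixP => i k; rewrite !mxE; under eq_bigr do rewrite !mxE.
  exact: sum_Minv_Pentry.
have [_ Punit] := mulmx1_unit MP1.
by rewrite -[LHS]mul1mx -MP1 -mulmxA mulmxV // mulmx1.
Qed.

Lemma sum_Minv r n : \sum_(k < n.+1) Minv r n k =
  \sum_(j < n./2.+1) (-r) ^+ j * ('C(n, (n - j.*2)./2))%:R.
Proof.
rewrite exchange_big /=.
under eq_bigr => j _ do rewrite -mulr_sumr -natr_sum -/(ballot_tail n j.*2) ballot_tailE.
have le_half : (n./2 < n.+1)%N by lia.
rewrite (big_ord_widen0 _ (F := fun j => (-r) ^+ j * (binom_tail n j.*2)%:R) le_half)
  => [|j lt_j]; last by rewrite /binom_tail ifN ?mulr0 //; lia.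
by apply: eq_bigr => j _; rewrite /binom_tail ifT //; have := ltn_ord j; lia.
Qed.

Theorem mainTheorem5 (r : int) (n : nat) :
  srow r n =
  \sum_(k < n./2.+1) ('C(n, ((n - k.*2)%N)./2))%:R * (-1) ^+ k * r ^+ k.
Proof.
rewrite /srow /Mentry invmx_Pmat; under eq_bigr do rewrite mxE.
by rewrite sum_Minv; apply: eq_bigr => k _; rewrite (exprNn r) mulrC mulrA.
Qed.
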